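(* Let $\mathcal{H}$ be a hypertree, $T$ a host tree of $\mathcal{H}$, and $F$ a subset of $V(\mathcal{H})$ that induces a subtree of every host tree of $\mathcal{H}$ and is not a one-element set. Then: (1) if $uv$ is an edge of $T$ with $\{u,v\}\subseteq F$, then $I_\mathcal{H}(uv)\subseteq F$; (2) $F=\bigcup_{uv\in E(T[F])} I_\mathcal{H}(uv)$, and this union is connected.
   Context: A hypergraph $\mathcal{H}$ has a finite vertex set $V(\mathcal{H})$ and a finite family of nonempty subsets (edges). A host tree of $\mathcal{H}$ is a tree with vertex set $V(\mathcal{H})$ in which every edge of $\mathcal{H}$ induces a connected subgraph; $\mathcal{H}$ is a hypertree if it has a host tree. For $V'\subseteq V(\mathcal{H})$, $I_\mathcal{H}(V')$ is the intersection of all edges of $\mathcal{H}$ containing $V'$, or $V(\mathcal{H})$ if no edge contains $V'$; $I_\mathcal{H}(uv)$ means $I_\mathcal{H}(\{u,v\})$. A union of sets is connected if the intersection graph of the sets is connected. $T[F]$ is the subgraph of $T$ induced by $F$. *)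

From mathcomp Require Import all_boot.
Set Implicit Arguments. Unset Strict Implicit. Unset Printing Implicit Defensive.

(* A hypergraph on the finite vertex set V (a finType) is a finite family
   (a sequence, repetitions allowed) of nonempty subsets of V.
   A graph on V is given by a relation t : rel V (adjacency). *)

Definition hyp_edges_nonempty (V : finType) (E : seq {set V}) : Prop :=
  forall e, e \in E -> e != set0.

Definition induced (V : finType) (t : rel V) (A : {set V}) : rel V :=
  [rel x y | [&& t x y, x \in A & y \in A]].

Definition connected_on (V : finType) (t : rel V) (A : {set V}) : Prop :=
  forall x y, x \in A -> y \in A -> connect (induced t A) x y.

Definition acyclic_on (V : finType) (t : rel V) (A : {set V}) : Prop :=
  forall p : seq V, uniq p -> 3 <= size p -> ~~ cycle (induced t A) p.

Definition is_tree_on (V : finType) (t : rel V) (A : {set V}) : Prop :=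
  [/\ symmetric t, irreflexive t, A != set0, connected_on t A & acyclic_on t A].

Definition host_tree (V : finType) (E : seq {set V}) (t : rel V) : Prop :=
  is_tree_on t [set: V] /\ forall e, e \in E -> connected_on t e.

(* I_H(V') : intersection of all edges containing V' (the empty
   intersection being V). *)
Definition I_H (V : finType) (E : seq {set V}) (V' : {set V}) : {set V} :=
  \bigcap_(e <- E | V' \subset e) e.

(* The union of the family S of sets is connected: the intersection graph
   of the sets of S is connected. *)
Definition family_connected (V : finType) (S : {set {set V}}) : Prop :=
  forall X Y, X \in S -> Y \in S ->
    connect [rel A B | [&& A \in S, B \in S & A :&: B != set0]] X Y.

From mathcomp Require Import all_boot.
Set Implicit Arguments. Unset Strict Implicit. Unset Printing Implicit Defensive.

(* If [x] lies in I(uv) but not in F for a tree edge [uv] inside F, delete [uv]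
   from T; say [x] falls on the side of [u].  Joining [x] to [v] gives a tree T'
   which is still a host tree, because every hyperedge through [u] and [v] also
   contains [x].  But every u-v path of T' passes through [x], so F cannot
   induce a subtree of T'.  For (2), every vertex of F has a T-neighbour in F,
   as F induces a subtree with at least two vertices, and the sets I(uv) of
   consecutive edges along a path of T[F] share a vertex. *)

Section Intersections.
Variables (V : finType) (E : seq {set V}).

Lemma I_HP (S : {set V}) a :
  reflect (forall e, e \in E -> S \subset e -> a \in e) (a \in I_H E S).
Proof.
rewrite /I_H -big_filter bigcap_seq; apply: (iffP bigcapP) => inI e.
  by move=> eE Se; apply: inI; rewrite mem_filter Se.
by rewrite mem_filter => /andP[Se eE]; apply: inI.
Qed.

Lemma I_H_pair_l a b : a \in I_H E [set a; b].
Proof. by apply/I_HP => e _ /subsetP; apply; rewrite !inE eqxx. Qed.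

Lemma I_H_pair_r a b : b \in I_H E [set a; b].
Proof. by apply/I_HP => e _ /subsetP; apply; rewrite !inE eqxx orbT. Qed.

End Intersections.

Section Graphs.
Variable V : finType.
Implicit Types (t : rel V) (A : {set V}).

Lemma induced_setT t : induced t setT =2 t.
Proof. by move=> a b; rewrite /induced /= !inE !andbT. Qed.

Lemma connected_onT t : connected_on t setT <-> forall a b, connect t a b.
Proof.
rewrite /connected_on; split=> [conn a b | conn a b _ _].
  by rewrite -(eq_connect (induced_setT t)); apply: conn; rewrite inE.
by rewrite (eq_connect (induced_setT t)).
Qed.

Lemma acyclic_onT t :
  acyclic_on t setT <-> forall p, uniq p -> 3 <= size p -> ~~ cycle t p.
Proof.
by rewrite /acyclic_on; split=> acy p up sp; have := acy p up sp;
  rewrite (eq_cycle (induced_setT t)).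
Qed.

Lemma induced_sym t A : symmetric t -> symmetric (induced t A).
Proof. by move=> symt a b; rewrite /induced /= symt [(a \in A) && _]andbC. Qed.

Lemma induced_subrel t t' A : subrel t t' -> subrel (induced t A) (induced t' A).
Proof. by move=> tt' a b /and3P[/tt' tab aA bA]; rewrite /induced /= tab aA bA. Qed.

Lemma sub_induced t A : subrel (induced t A) t.
Proof. by move=> a b /andP[]. Qed.

Lemma sub_connect t t' : subrel t t' -> subrel (connect t) (connect t').
Proof. by move=> tt'; apply: connect_sub => a b /tt'/connect1. Qed.

Lemma acyclic_on_sub t t' A : subrel t t' -> acyclic_on t' A -> acyclic_on t A.
Proof.
move=> tt' acy p up sp; apply: contra (acy p up sp).
exact/sub_cycle/induced_subrel.
Qed.

Lemma connected_on_neighbor t A w :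
  connected_on t A -> #|A| != 1 -> w \in A -> exists2 z, t w z & z \in A.
Proof.
move=> connA A_neq1 wA.
have /set0Pn[y] : A :\ w != set0.
  rewrite -cards_eq0; apply: contra A_neq1 => /eqP A_w.
  by rewrite (cardsD1 w) wA A_w.
rewrite in_setD1 => /andP[yw yA].
case/connectP: (connA w y wA yA) => [[|z s]] /=.
  by move=> _ ey; rewrite ey eqxx in yw.
by case/andP=> /and3P[twz _ zA] _ _; exists z.
Qed.

Definition rem_edge t (u v : V) : rel V :=
  [rel a b | t a b && ~~ ((a == u) && (b == v) || (a == v) && (b == u))].

Definition add_edge t (x y : V) : rel V :=
  [rel a b | t a b || (a == x) && (b == y) || (a == y) && (b == x)].

Lemma rem_edge_sub t u v : subrel (rem_edge t u v) t.
Proof. by move=> a b /andP[]. Qed.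

Lemma rem_edgeC t u v : rem_edge t u v =2 rem_edge t v u.
Proof. by move=> a b; rewrite /rem_edge /= orbC. Qed.

Lemma rem_edge_sym t u v : symmetric t -> symmetric (rem_edge t u v).
Proof.
move=> symt a b; rewrite /rem_edge /= symt.
by case: (a == u); case: (a == v); case: (b == u); case: (b == v).
Qed.

Lemma rem_edge_induced t A u v :
  rem_edge (induced t A) u v =2 induced (rem_edge t u v) A.
Proof. by move=> a b; rewrite /induced /rem_edge /= andbAC. Qed.

Lemma add_edge_sub t x y : subrel t (add_edge t x y).
Proof. by move=> a b tab; rewrite /add_edge /= tab. Qed.

Lemma add_edge_sym t x y : symmetric t -> symmetric (add_edge t x y).
Proof.
by move=> symt a b; rewrite /add_edge /= symt orbAC andbC [(b == y) && _]andbC.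
Qed.

Lemma add_edge_irr t x y : irreflexive t -> x != y -> irreflexive (add_edge t x y).
Proof.
move=> irrt xy a; rewrite /add_edge /= irrt.
by apply/negP=> /orP[] /andP[/eqP-> /eqP ax]; rewrite ?ax eqxx in xy.
Qed.

Lemma add_edge_off t x y a b : add_edge t x y a b -> a != x -> b != x -> t a b.
Proof.
rewrite /add_edge /= => /orP[/orP[//|/andP[/eqP->]]|/andP[_ /eqP->]];
  by rewrite eqxx.
Qed.

Lemma connect_rem_edge t u v w :
  connect t u w -> connect (rem_edge t u v) u w || connect (rem_edge t u v) v w.
Proof.
case/connectP=> p + ->; elim/last_ind: p => [|p b IHp]; first by rewrite connect0.
rewrite rcons_path last_rcons => /andP[/IHp reach tab].
case t0ab: (rem_edge t u v (last u p) b).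
  by case/orP: reach => r; rewrite (connect_trans r (connect1 t0ab)) ?orbT.
move: t0ab; rewrite /rem_edge /= tab => /negbFE/orP[]/andP[_ /eqP->];
  by rewrite connect0 ?orbT.
Qed.

Lemma tree_edge_bridge t u v :
  is_tree_on t setT -> t u v -> ~ connect (rem_edge t u v) u v.
Proof.
case=> symt irrt _ _ /acyclic_onT acyt tuv /connectP[p0 pth0].
case/shortenP: pth0 => [[|y [|z p]]] pth up _ /= vE.
- by rewrite vE irrt in tuv.
- by move: pth; rewrite /= -vE /rem_edge /= !eqxx andbF.
move/negP: (acyt _ up isT); apply.
have := sub_path (@rem_edge_sub t u v) pth.
by rewrite /= rcons_path -vE [t v u]symt tuv andbT.
Qed.

Lemma add_edgeC t x y : add_edge t x y =2 add_edge t y x.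
Proof. by move=> a b; rewrite /add_edge /= orbAC. Qed.

Lemma add_edge_acyclic t x y :
  symmetric t -> acyclic_on t setT -> ~ connect t x y ->
  acyclic_on (add_edge t x y) setT.
Proof.
move=> symt /acyclic_onT acyt nxy; apply/acyclic_onT => p up sp; apply/negP => cp.
have xy : x != y by apply: contra_not_neq nxy => ->.
have off_x a q : all (predC1 x) (a :: q) -> path (add_edge t x y) a q -> path t a q.
  by apply: sub_in_path => b c bx cx /add_edge_off; apply.
have off_y a b : add_edge t x y a b -> a != y -> b != y -> t a b.
  by rewrite add_edgeC => /add_edge_off; apply.
case xp: (x \in p); last first.
  move/negP: (acyt p up sp); apply; apply: (sub_in_cycle (P := predC1 x)) cp.
    by move=> b c bx cx /add_edge_off; apply.
  by apply/allP => b bp; apply: contraFneq xp => <-.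
(* Rotate the cycle to start at [x]: its edges away from [x] lie in [t], and
   at most one of the two edges at [x] is the new edge [xy]. *)
case/rot_to: xp => i [|a q] rot_p; move: cp up sp;
  rewrite -(rot_cycle i) -(rot_uniq i) -(size_rot i) rot_p //.
rewrite /= rcons_path => /and3P[txa pth tbx] /and3P[xaq aq uq] sq.
have {}pth : path t a q.
  by apply: (off_x _ _ _ pth); apply/allP => c cq; apply: contraNneq xaq => <-.
have ba : last a q != a.
  clear -aq sq; case: q aq sq => // c q aq _ /=.
  by apply: contraNneq aq => <-; apply: mem_last.
have [ay|ay] := eqVneq a y.
  have tbx' : t (last a q) x by apply: (off_y _ _ tbx); rewrite // -ay.
  apply: nxy; rewrite (sym_connect_sym symt) -ay.
  by apply/connectP; exists (rcons q x); rewrite ?rcons_path ?last_rcons ?pth.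
have tax : t x a by apply: (off_y _ _ txa); rewrite // eq_sym.
have [by_|by_] := eqVneq (last a q) y.
  by apply: nxy; apply/connectP; exists (a :: q); rewrite /= ?tax.
have uxaq : uniq [:: x, a & q] by rewrite /= xaq aq uq.
have /negP := acyt _ uxaq sq; apply.
by rewrite /= rcons_path tax pth (off_y _ _ tbx) // eq_sym.
Qed.

Lemma tree_exchange t u v x :
  is_tree_on t setT -> t u v -> connect (rem_edge t u v) u x ->
  is_tree_on (add_edge (rem_edge t u v) x v) setT.
Proof.
move=> tree tuv ux; have [symt irrt nzV /connected_onT conn acyt] := tree.
set t0 := rem_edge t u v; set t' := add_edge t0 x v.
have sym0 : symmetric t0 by apply: rem_edge_sym.
have nxv : ~ connect t0 x v.
  by move=> xv; apply: (tree_edge_bridge tree tuv); apply: connect_trans ux xv.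
have xv : x != v by apply: contra_not_neq nxv => ->.
have lift := sub_connect (@add_edge_sub t0 x v).
split=> //; first exact: add_edge_sym.
- by apply: add_edge_irr => // a; apply/negP => /rem_edge_sub; rewrite irrt.
- apply/connected_onT => a b.
  suff reach_v w : connect t' v w.
    apply: connect_trans (reach_v b).
    by rewrite (sym_connect_sym (add_edge_sym x v sym0)).
  have t'vx : t' v x by rewrite /t' /add_edge /= !eqxx orbT.
  case/orP: (connect_rem_edge v (conn u w)) => [uw|]; last exact: lift.
  apply: connect_trans (connect1 t'vx) (lift _ _ _).
  by apply: connect_trans uw; rewrite (sym_connect_sym sym0).
apply: add_edge_acyclic => //.
exact: acyclic_on_sub (@rem_edge_sub t u v) acyt.
Qed.

Lemma host_tree_exchange (E : seq {set V}) t u v x :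
  host_tree E t -> t u v -> connect (rem_edge t u v) u x ->
  (forall e, e \in E -> u \in e -> v \in e -> x \in e) ->
  host_tree E (add_edge (rem_edge t u v) x v).
Proof.
move=> [tree Econn] tuv ux uv_x; split; first exact: tree_exchange.
set t0 := rem_edge t u v; set t' := add_edge t0 x v.
have [symt _ _ _ _] := tree.
have sym0 : symmetric t0 by apply: rem_edge_sym.
have t0t' : subrel t0 t' by apply: add_edge_sub.
move=> e eE.
(* The deleted edge [uv] is rerouted through [x], which lies in [e] and on the
   side of [u]. *)
have join_uv : u \in e -> v \in e -> connect (induced t' e) u v.
  move=> ue ve; have xe := uv_x e eE ue ve.
  case/orP: (connect_rem_edge v (Econn e eE u x ue xe));
    rewrite (eq_connect (rem_edge_induced t e u v)) => reach.
    apply: connect_trans (sub_connect (induced_subrel t0t') reach) (connect1 _).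
    by rewrite /induced /t' /add_edge /= xe ve !eqxx !orbT.
  case: (tree_edge_bridge tree tuv); apply: connect_trans ux _.
  by rewrite (sym_connect_sym sym0); apply: sub_connect reach; apply: sub_induced.
move=> a b ae be; apply: connect_sub (Econn e eE a b ae be) => c d /and3P[tcd ce de].
case t0cd: (t0 c d); first by apply: connect1; rewrite /induced /= ce de t0t'.
move: t0cd; rewrite /t0 /rem_edge /= tcd => /negbFE/orP[]/andP[/eqP cu /eqP dv];
  rewrite cu dv in ce de *; first exact: join_uv.
rewrite (sym_connect_sym (induced_sym e (add_edge_sym x v sym0))).
exact: join_uv.
Qed.

End Graphs.

Section HostTrees.
Variables (V : finType) (E : seq {set V}) (t : rel V) (F : {set V}).
Hypothesis hostE : host_tree E t.
Hypothesis subtreeF : forall t' : rel V, host_tree E t' -> is_tree_on t' F.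

Lemma host_subtree_closed u v x :
  t u v -> u \in F -> v \in F -> x \in I_H E [set u; v] ->
  connect (rem_edge t u v) u x -> x \in F.
Proof.
move=> tuv uF vF /I_HP xI ux; apply/negPn/negP => xF.
have uv_x e : e \in E -> u \in e -> v \in e -> x \in e.
  by move=> eE ue ve; apply: xI; rewrite // subUset !sub1set ue ve.
have [_ _ _ connF _] := subtreeF (host_tree_exchange hostE tuv ux uv_x).
apply: (tree_edge_bridge (proj1 hostE) tuv).
apply: (sub_connect _ (connF u v uF vF)) => a b /and3P[tab aF bF].
by apply: (add_edge_off tab); apply: contraNneq xF => <-.
Qed.

Lemma I_H_edge_subset u v :
  t u v -> u \in F -> v \in F -> I_H E [set u; v] \subset F.
Proof.
move=> tuv uF vF; apply/subsetP => x xI.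
have [[symt _ _ /connected_onT conn _] _] := hostE.
case/orP: (connect_rem_edge v (conn u x)) => reach.
  exact: host_subtree_closed reach.
apply: (host_subtree_closed (u := v) (v := u)); rewrite 1?setUC -1?symt //.
by rewrite (eq_connect (rem_edgeC t v u)).
Qed.

Hypothesis F_neq1 : #|F| != 1.

Lemma bigcup_I_H_edges :
  F = \bigcup_(p : V * V | [&& t p.1 p.2, p.1 \in F & p.2 \in F])
        I_H E [set p.1; p.2].
Proof.
have [_ _ _ connF _] := subtreeF hostE.
apply/setP => w; apply/idP/bigcupP => [wF | [p /and3P[tp p1F p2F]]].
  have [z twz zF] := connected_on_neighbor connF F_neq1 wF.
  by exists (w, z); [rewrite /= twz wF zF | apply: I_H_pair_l].
exact/subsetP/I_H_edge_subset.
Qed.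

Lemma I_H_edges_family_connected :
  family_connected
    [set I_H E [set p.1; p.2] | p : V * V in
       [set q : V * V | [&& t q.1 q.2, q.1 \in F & q.2 \in F]]].
Proof.
have [[symt _ _ _ _] _] := hostE; have [_ _ _ connF _] := subtreeF hostE.
set P := [set q : V * V | _]; set S := [set _ | p in P].
have inS p : p \in P -> I_H E [set p.1; p.2] \in S by move=> pP; apply: imset_f.
move=> X Y /imsetP[p pP ->] /imsetP[q qP ->].
move: (pP) (qP); rewrite !inE => /and3P[_ p1F _] /and3P[_ q1F _].
case/connectP: (connF p.1 q.1 p1F q1F) => s.
elim: s p pP {p1F} => [|b s IHs] p pP /= pth lq.
  apply: connect1; rewrite /= !inS //; apply/set0Pn; exists p.1.
  by rewrite inE I_H_pair_l lq I_H_pair_l.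
case/andP: pth => /and3P[tpb p1F bF] pth.
have bpP : (b, p.1) \in P by rewrite inE /= bF p1F symt tpb.
apply: connect_trans (IHs _ bpP pth lq); apply: connect1.
rewrite /= inS // (inS _ bpP); apply/set0Pn; exists p.1.
by rewrite inE I_H_pair_l I_H_pair_r.
Qed.

End HostTrees.

Theorem mainTheorem3 (V : finType) (E : seq {set V}) (t : rel V) (F : {set V}) :
  hyp_edges_nonempty E ->
  host_tree E t ->
  (forall t' : rel V, host_tree E t' -> is_tree_on t' F) ->
  #|F| != 1 ->
  (forall u v, t u v -> u \in F -> v \in F -> I_H E [set u; v] \subset F) /\
  (F = \bigcup_(p : V * V | [&& t p.1 p.2, p.1 \in F & p.2 \in F])
          I_H E [set p.1; p.2] /\
   family_connected
     [set I_H E [set p.1; p.2] | p : V * V in [set q : V * V | [&& t q.1 q.2, q.1 \in F & q.2 \in F]]]).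
Proof.
(* The hyperedges need not be nonempty. *)
move=> _ hostE subtreeF F_neq1; split; first exact: I_H_edge_subset.
split; first exact: bigcup_I_H_edges.
exact: I_H_edges_family_connected.
Qed.
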